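(* Let $A\in\mathbb{R}^{n\times n}$ be symmetric, $\beta>0$, $f(\mathbf{z})=\frac12\mathbf{z}^TA\mathbf{z}+\frac{\beta}{2}\sum_kz_k^4$ on $\mathbb{S}^{n-1}$, and let $\mathbf{z}\in\mathbb{S}^{n-1}$ be a stationary point, i.e. $[A+2\beta\,\mathrm{diag}(z_1^2,\dots,z_n^2)]\mathbf{z}=2\lambda\mathbf{z}$ with $2\lambda=\mathbf{z}^TA\mathbf{z}+2\beta\|\mathbf{z}\|_4^4$, such that $H=A+2\beta\,\mathrm{diag}(z_1^2,\dots,z_n^2)-2\lambda I$ is positive semidefinite. Then the KL exponent at $\mathbf{z}$ is at least $\frac14$: there exist $\delta,\eta>0$ such that $|f(\mathbf{y})-f(\mathbf{z})|^{3/4}\le\eta\|\mathrm{grad} f(\mathbf{y})\|$ for all $\mathbf{y}\in\mathbb{S}^{n-1}$ with $\|\mathbf{y}-\mathbf{z}\|<\delta$.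
   Context: $\mathbb{S}^{n-1}$ is the unit sphere in $\mathbb{R}^n$. For $\mathbf{y}\in\mathbb{S}^{n-1}$, $\mathrm{grad} f(\mathbf{y})=(I-\mathbf{y}\mathbf{y}^T)[A\mathbf{y}+2\beta\,\mathrm{diag}(y_1^2,\dots,y_n^2)\mathbf{y}]$ is the Riemannian gradient. *)

From HB Require Import structures.
From mathcomp Require Import all_boot all_order all_algebra.
From mathcomp Require Import all_classical all_reals exp.
Set Implicit Arguments. Unset Strict Implicit. Unset Printing Implicit Defensive.
Import Order.TTheory GRing.Theory Num.Theory.
Local Open Scope ring_scope.

Section Defs.
Variables (R : realType) (n : nat).

Definition sqnorm (v : 'cV[R]_n) : R := \sum_(i < n) (v i 0) ^+ 2.
Definition norm2 (v : 'cV[R]_n) : R := Num.sqrt (sqnorm v).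

Definition norm4_4 (v : 'cV[R]_n) : R := \sum_(i < n) (v i 0) ^+ 4.

Definition on_sphere (v : 'cV[R]_n) : Prop := sqnorm v = 1.

Definition qform (M : 'M[R]_n) (z : 'cV[R]_n) : R := (z^T *m M *m z) 0 0.

Definition diagsq (z : 'cV[R]_n) : 'M[R]_n := diag_mx (\row_k ((z k 0) ^+ 2)).

Definition fobj (A : 'M[R]_n) (beta : R) (z : 'cV[R]_n) : R :=
  qform A z / 2 + beta / 2 * norm4_4 z.

Definition rgrad (A : 'M[R]_n) (beta : R) (y : 'cV[R]_n) : 'cV[R]_n :=
  (1%:M - y *m y^T) *m (A *m y + (2 * beta) *: (diagsq y *m y)).

Definition psd (M : 'M[R]_n) : Prop := forall x : 'cV[R]_n, 0 <= qform M x.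

End Defs.

(* Let H = A + 2 beta diag(z_i^2) - 2 lam I: it is symmetric, positive semidefinite and
   kills z.  For y on the sphere put d = y - z and u_i = y_i^2 - z_i^2.  Then
   f(y) - f(z) = (D + beta U) / 2 with D = d^T H d and U = sum_i u_i^2, and grad f(y) is
   the tangential part of g = H d + 2 beta (y_i u_i)_i.
   Adding to H the diagonal projection onto the support of z yields a psd matrix whose
   kernel gives an error bound: d is at squared distance O(D + sum_{z_i <> 0} d_i^2)
   = O(D + U) from some k with H k = 0 and k = 0 on the support of z.  The test vector
   x = d - k/2 satisfies <x, grad f(y)> >= (D + beta U) / 4 near z, all error terms being
   of higher order, and |x|^4 = O(D + beta U), since |d_i| <= |u_i| / min_j |z_j| on the
   support of z and d_i^2 = |u_i| off it.  Cauchy-Schwarz then gives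
   (D + beta U)^(3/2) = O(|grad f(y)|^2). *)

From HB Require Import structures.
From mathcomp Require Import all_boot all_order all_algebra.
From mathcomp Require Import all_classical all_reals exp.
From mathcomp Require Import ring lra.
Import Order.TTheory GRing.Theory Num.Theory.
Local Open Scope ring_scope.
Set Implicit Arguments. Unset Strict Implicit. Unset Printing Implicit Defensive.

Section InnerProduct.
Variables (R : realType) (n : nat).
Implicit Types (a b c v : 'cV[R]_n) (M : 'M[R]_n).

Definition dot a b : R := \sum_(i < n) a i 0 * b i 0.

Lemma dotC a b : dot a b = dot b a.
Proof. by apply: eq_bigr => i _; rewrite mulrC. Qed.

Lemma dotDl a b c : dot (a + b) c = dot a c + dot b c.
Proof. by rewrite /dot -big_split; apply: eq_bigr => i _; rewrite !mxE mulrDl. Qed.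

Lemma dotDr a b c : dot c (a + b) = dot c a + dot c b.
Proof. by rewrite dotC dotDl !(dotC c). Qed.

Lemma dotZl (k : R) a b : dot (k *: a) b = k * dot a b.
Proof. by rewrite /dot mulr_sumr; apply: eq_bigr => i _; rewrite !mxE mulrA. Qed.

Lemma dotZr (k : R) a b : dot a (k *: b) = k * dot a b.
Proof. by rewrite dotC dotZl dotC. Qed.

Lemma dotNl a b : dot (- a) b = - dot a b.
Proof. by rewrite -scaleN1r dotZl mulN1r. Qed.

Lemma dotNr a b : dot a (- b) = - dot a b.
Proof. by rewrite dotC dotNl dotC. Qed.

Lemma dotBl a b c : dot (a - b) c = dot a c - dot b c.
Proof. by rewrite dotDl dotNl. Qed.

Lemma dotBr a b c : dot c (a - b) = dot c a - dot c b.
Proof. by rewrite dotDr dotNr. Qed.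

Lemma dot0l a : dot 0 a = 0.
Proof. by rewrite /dot big1 // => i _; rewrite mxE mul0r. Qed.

Lemma dot0r a : dot a 0 = 0.
Proof. by rewrite dotC dot0l. Qed.

Lemma dot_mulmx a M b : dot a (M *m b) = dot (M^T *m a) b.
Proof.
rewrite /dot; under eq_bigr => i _ do rewrite mxE big_distrr /=.
rewrite exchange_big /=; apply: eq_bigr => j _.
by rewrite mxE big_distrl /=; apply: eq_bigr => i _; rewrite !mxE; ring.
Qed.

Lemma dot_diag_mx a b (r : 'rV[R]_n) :
  dot a (diag_mx r *m b) = \sum_i r 0 i * a i 0 * b i 0.
Proof. by rewrite mul_diag_mx; apply: eq_bigr => i _; rewrite mxE; ring. Qed.

Lemma dot_scalar_mx a b (c : R) : dot a (c%:M *m b) = c * dot a b.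
Proof. by rewrite mul_scalar_mx dotZr. Qed.

Lemma qformE M v : qform M v = dot v (M *m v).
Proof.
rewrite dot_mulmx /qform /dot mxE; apply: eq_bigr => i _; rewrite !mxE.
by congr (_ * _); apply: eq_bigr => j _; rewrite !mxE mulrC.
Qed.

Lemma sqnormE v : sqnorm v = dot v v.
Proof. by apply: eq_bigr => i _; rewrite expr2. Qed.

Lemma sqnorm_ge0 v : 0 <= sqnorm v.
Proof. by apply: sumr_ge0 => i _; apply: sqr_ge0. Qed.

Lemma sqr_coord_le_sqnorm v i : v i 0 ^+ 2 <= sqnorm v.
Proof. by rewrite /sqnorm (bigD1 i) //= lerDl; apply: sumr_ge0 => j _; apply: sqr_ge0. Qed.

Lemma sqnorm_le_of_norm2_lt v (r : R) : norm2 v < r -> sqnorm v <= r ^+ 2.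
Proof.
move=> vr; rewrite -(sqr_sqrtr (sqnorm_ge0 v)) lerXn2r ?nnegrE ?sqrtr_ge0 ?ltW //.
exact: le_lt_trans (sqrtr_ge0 _) vr.
Qed.

Lemma sqnorm_eq0 v : sqnorm v = 0 -> v = 0.
Proof.
move=> v0; apply/matrixP => i j; rewrite (ord1 j) mxE; apply/eqP; rewrite -sqrf_eq0.
by apply/eqP/(psumr_eq0P (fun k _ => sqr_ge0 (v k 0)) v0).
Qed.

Lemma sqnorm0 : sqnorm (0 : 'cV[R]_n) = 0.
Proof. by rewrite sqnormE dot0l. Qed.

Lemma cauchy_schwarz a b : dot a b ^+ 2 <= sqnorm a * sqnorm b.
Proof.
have [/sqnorm_eq0 ->|b_neq0] := eqVneq (sqnorm b) 0.
  by rewrite dot0r expr0n /= sqnorm0 mulr0.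
have b_gt0 : 0 < sqnorm b by rewrite lt_def b_neq0 sqnorm_ge0.
(* expand |B a - c b|^2 >= 0 with B = |b|^2 and c = a.b *)
have := sqnorm_ge0 (sqnorm b *: a - dot a b *: b).
rewrite sqnormE !(dotBl, dotBr, dotZl, dotZr) -!sqnormE (dotC b a).
set B := sqnorm b; set c := dot a b.
have -> : B * (B * sqnorm a - c * c) - c * (B * c - c * B) = B * (sqnorm a * B - c ^+ 2) by ring.
by rewrite pmulr_rge0 // subr_ge0.
Qed.

Lemma sqnorm_midpoint_le a b :
  sqnorm (2^-1 *: (a + b)) <= (sqnorm a + sqnorm b) / 2.
Proof.
have := sqnorm_ge0 (a - b).
rewrite !sqnormE !(dotDl, dotDr, dotNl, dotNr, dotZl, dotZr) (dotC b a).
by rewrite -!sqnormE; lra.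
Qed.

Lemma abs_coord_mul_le_sqnorm v i j : `|v i 0| * `|v j 0| <= sqnorm v.
Proof.
have := sqr_coord_le_sqnorm v i; have := sqr_coord_le_sqnorm v j.
rewrite -(real_normK (num_real (v i 0))) -(real_normK (num_real (v j 0))).
have := sqr_ge0 (`|v i 0| - `|v j 0|); nra.
Qed.

Lemma quad_form_bounded M :
  exists c : R, 0 <= c /\ forall v, `|dot v (M *m v)| <= c * sqnorm v.
Proof.
exists (\sum_(i < n) \sum_(j < n) `|M i j|); split.
  by apply: sumr_ge0 => i _; apply: sumr_ge0.
move=> v; rewrite /dot mulr_suml; apply: (le_trans (ler_norm_sum _ _ _)).
apply: ler_sum => i _; rewrite mxE big_distrr mulr_suml /=.
apply: (le_trans (ler_norm_sum _ _ _)); apply: ler_sum => j _.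
by rewrite !normrM mulrCA ler_wpM2l // abs_coord_mul_le_sqnorm.
Qed.

Lemma dot_ker_sym M a b : M^T = M -> M *m a = 0 -> dot a (M *m b) = 0.
Proof. by move=> sM Ma; rewrite dot_mulmx sM Ma dot0l. Qed.

End InnerProduct.

Section PsdMatrices.
Variables (R : realType) (n : nat).
Implicit Types (a b d v : 'cV[R]_n) (Q : 'M[R]_n).

Lemma quad_form_comb Q a b (p q : R) : Q^T = Q ->
  dot (p *: a + q *: b) (Q *m (p *: a + q *: b)) =
  p ^+ 2 * dot a (Q *m a) + 2 * p * q * dot a (Q *m b) + q ^+ 2 * dot b (Q *m b).
Proof.
move=> sQ; have Qba : dot b (Q *m a) = dot a (Q *m b) by rewrite dot_mulmx sQ dotC.
by rewrite !mulmxDr -!scalemxAr !(dotDl, dotDr, dotZl, dotZr) Qba; ring.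
Qed.

Lemma psd_cauchy_schwarz Q a b : Q^T = Q -> psd Q ->
  dot a (Q *m b) ^+ 2 <= dot a (Q *m a) * dot b (Q *m b).
Proof.
move=> sQ pQ; have pQv v : 0 <= dot v (Q *m v) by rewrite -qformE.
set qa := dot a (Q *m a); set qb := dot b (Q *m b); set c := dot a (Q *m b).
have qa0 : 0 <= qa := pQv a; have qb0 : 0 <= qb := pQv b.
have comb p q : 0 <= p ^+ 2 * qa + 2 * p * q * c + q ^+ 2 * qb.
  by rewrite -quad_form_comb.
have [qb_eq0|qb_neq0] := eqVneq qb 0.
  have [qa_eq0|qa_neq0] := eqVneq qa 0.
    by have := comb 1 (- c); rewrite qa_eq0 qb_eq0 mulr0; nra.
  have qa_gt0 : 0 < qa by rewrite lt_def qa_neq0.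
  have := comb (- c) qa; rewrite qb_eq0 mulr0 => h.
  have : 0 <= qa * (- c ^+ 2) by nra.
  by rewrite pmulr_rge0 // oppr_ge0 => /le_trans; apply; rewrite mulr_ge0.
have qb_gt0 : 0 < qb by rewrite lt_def qb_neq0.
have := comb qb (- c) => h.
have : 0 <= qb * (qa * qb - c ^+ 2) by nra.
by rewrite pmulr_rge0 // subr_ge0.
Qed.

Lemma sym_submx_mul_self Q : Q^T = Q -> (Q <= Q *m Q)%MS.
Proof.
move=> sQ; rewrite -(mxrank_leqif_sup (submxMl Q Q)).2.
suff /eqP QkerQ0 : (Q :&: kermx Q)%MS == 0.
  by have := mxrank_mul_ker Q Q; rewrite QkerQ0 mxrank0 addn0 => ->.
apply/rowV0P => v; rewrite sub_capmx sub_kermx => /andP[/submxP[w ->] /eqP wQQ].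
have wQ0 : (w *m Q)^T = 0.
  apply: sqnorm_eq0; transitivity ((w *m Q *m (w *m Q)^T) 0 0).
    by rewrite mxE; apply: eq_bigr => i _; rewrite !mxE expr2.
  by rewrite [X in _ *m X]trmx_mul sQ mulmxA wQQ mul0mx mxE.
by rewrite -[w *m Q]trmxK wQ0 trmx0.
Qed.

Lemma sym_range_rinv Q : Q^T = Q ->
  exists B : 'M[R]_n, forall d, Q *m (B *m (Q *m d)) = Q *m d.
Proof.
move=> sQ; exists (Q *m (pinvmx (Q *m Q))^T) => d.
have dQ_range : (d^T *m Q <= Q *m Q)%MS.
  exact: submx_trans (submxMl _ _) (sym_submx_mul_self sQ).
have := mulmxKpV dQ_range; set p := pinvmx _ => /(congr1 trmx).
by rewrite !trmx_mul !trmxK sQ !mulmxA.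
Qed.

Lemma psd_sqnorm_mul_le Q : Q^T = Q -> psd Q ->
  exists c : R, 0 <= c /\ forall d, sqnorm (Q *m d) <= c * dot d (Q *m d).
Proof.
move=> sQ pQ; have [c [c0 Qc]] := quad_form_bounded Q.
exists c; split => // d; set e := Q *m d.
have qd0 : 0 <= dot d e by rewrite -qformE.
have := psd_cauchy_schwarz e d sQ pQ; rewrite -/e -sqnormE.
have Qe : dot e (Q *m e) <= c * sqnorm e := le_trans (ler_norm _) (Qc e).
have [->|e_neq0] := eqVneq (sqnorm e) 0; first by rewrite mulr_ge0.
have e_gt0 : 0 < sqnorm e by rewrite lt_def e_neq0 sqnorm_ge0.
move=> /le_trans /(_ (ler_wpM2r qd0 Qe)).
by rewrite expr2 -mulrA (mulrCA c) ler_pM2l.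
Qed.

Lemma psd_kernel_error_bound Q : Q^T = Q -> psd Q ->
  exists C : R, 0 < C /\
    forall d, exists k, Q *m k = 0 /\ sqnorm (d - k) <= C * dot d (Q *m d).
Proof.
move=> sQ pQ; have [B QBQ] := sym_range_rinv sQ.
have [cB [cB0 BcB]] := quad_form_bounded (B^T *m B).
have [cQ [cQ0 QcQ]] := psd_sqnorm_mul_le sQ pQ.
exists (cB * cQ + 1); split; first by rewrite ltr_wpDl ?mulr_ge0.
(* d differs from the kernel element k by r = B Q d, which Q maps to Q d *)
move=> d; set r := B *m (Q *m d); exists (d - r); split.
  by rewrite mulmxBr QBQ subrr.
have qd0 : 0 <= dot d (Q *m d) by rewrite -qformE.
have r_le : sqnorm r <= cB * sqnorm (Q *m d).
  rewrite sqnormE /r dot_mulmx dotC mulmxA.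
  exact: le_trans (ler_norm _) (BcB _).
rewrite opprB addrC subrK (le_trans r_le) // mulrDl mul1r -mulrA ler_wpDr //.
by rewrite ler_wpM2l.
Qed.

Lemma dot_diag_indicator (P : pred 'I_n) v :
  dot v (diag_mx (\row_i (P i)%:R) *m v) = \sum_(i | P i) v i 0 ^+ 2.
Proof.
rewrite dot_diag_mx [RHS]big_mkcond; apply: eq_bigr => i _ /=.
by rewrite mxE; case: (P i); rewrite ?mul1r ?mul0r ?expr2.
Qed.

Lemma psd_support_error_bound Q (P : pred 'I_n) : Q^T = Q -> psd Q ->
  exists C : R, 0 < C /\ forall d, exists k, [/\ Q *m k = 0,
    forall i, P i -> k i 0 = 0 &
    sqnorm (d - k) <= C * (dot d (Q *m d) + \sum_(i | P i) d i 0 ^+ 2)].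
Proof.
move=> sQ pQ; pose E : 'M[R]_n := diag_mx (\row_i (P i)%:R).
have QE_form v : dot v ((Q + E) *m v) = dot v (Q *m v) + \sum_(i | P i) v i 0 ^+ 2.
  by rewrite mulmxDl dotDr dot_diag_indicator.
have sum_ge0 v : 0 <= \sum_(i | P i) v i 0 ^+ 2 by rewrite sumr_ge0 // => i _; rewrite sqr_ge0.
have sQE : (Q + E)^T = Q + E by rewrite linearD /= sQ tr_diag_mx.
have pQE : psd (Q + E).
  by move=> v; rewrite qformE QE_form addr_ge0 // -qformE.
have [C [C0 QE_bound]] := psd_kernel_error_bound sQE pQE.
exists C; split => // d; have [k [QEk dk]] := QE_bound d.
(* both nonnegative parts of the form vanish at a kernel vector of Q + E *)
have form0 : dot k (Q *m k) + \sum_(i | P i) k i 0 ^+ 2 = 0.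
  by rewrite -QE_form QEk dot0r.
have supp0 : \sum_(i | P i) k i 0 ^+ 2 = 0.
  by apply/eqP; rewrite eq_le sum_ge0 andbT; have := pQ k; rewrite qformE; lra.
have k_supp i : P i -> k i 0 = 0.
  move=> Pi; apply/eqP; rewrite -sqrf_eq0; apply/eqP.
  exact: (psumr_eq0P (fun j _ => sqr_ge0 (k j 0)) supp0).
have Ek : E *m k = 0.
  apply/matrixP => i j; rewrite (ord1 j) mul_diag_mx !mxE.
  by case: (P i) (k_supp i) => [->|_]; rewrite ?mulr0 ?mul0r.
exists k; split => //; last by rewrite -QE_form.
by move: QEk; rewrite mulmxDl Ek addr0.
Qed.

End PsdMatrices.

Section SphereDeviation.
Variables (R : realType) (n : nat).
Implicit Types (v y z : 'cV[R]_n).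

Definition sqdev y z : R := \sum_i (y i 0 ^+ 2 - z i 0 ^+ 2) ^+ 2.

Definition cubic_dev y z : 'cV[R]_n := \col_i (y i 0 * (y i 0 ^+ 2 - z i 0 ^+ 2)).

Definition tangent_proj y v : 'cV[R]_n := v - dot y v *: y.

Lemma sqdev_ge0 y z : 0 <= sqdev y z.
Proof. by rewrite sumr_ge0 // => i _; rewrite sqr_ge0. Qed.

Lemma tangent_projE y v : (1%:M - y *m y^T) *m v = tangent_proj y v.
Proof.
rewrite mulmxBl mul1mx -mulmxA; congr (_ - _).
apply/matrixP => i j; rewrite (ord1 j) !mxE big_ord1 !mxE mulrC; congr (_ * _).
by apply: eq_bigr => k _; rewrite !mxE.
Qed.

Lemma sum_sqr_sub_sphere y z : on_sphere y -> on_sphere z ->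
  \sum_i (y i 0 ^+ 2 - z i 0 ^+ 2) = 0.
Proof. by rewrite sumrB /on_sphere /sqnorm => -> ->; rewrite subrr. Qed.

Lemma sqr_coord_le1 y i : on_sphere y -> y i 0 ^+ 2 <= 1.
Proof. by move=> <-; apply: sqr_coord_le_sqnorm. Qed.

End SphereDeviation.

Section Landscape.
Variables (R : realType) (n : nat) (A : 'M[R]_n) (beta lam : R) (z : 'cV[R]_n).
Hypotheses (A_sym : A^T = A) (z_sphere : on_sphere z)
  (z_stationary : (A + (2 * beta) *: diagsq z) *m z = (2 * lam) *: z).

Definition hess_mx : 'M[R]_n := A + (2 * beta) *: diagsq z - (2 * lam)%:M.

Lemma hess_mx_sym : hess_mx^T = hess_mx.
Proof. by rewrite !linearD linearN linearZ /= A_sym tr_diag_mx tr_scalar_mx. Qed.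

Lemma hess_mx_z : hess_mx *m z = 0.
Proof. by rewrite mulmxBl z_stationary mul_scalar_mx subrr. Qed.

Lemma A_hess_mx : A = hess_mx - (2 * beta) *: diagsq z + (2 * lam)%:M.
Proof. by rewrite /hess_mx (addrAC (A + _)) addrK subrK. Qed.

Lemma qform_hess_mx v : qform A v =
  dot v (hess_mx *m v) - 2 * beta * \sum_i z i 0 ^+ 2 * v i 0 ^+ 2 + 2 * lam * sqnorm v.
Proof.
rewrite qformE {1}A_hess_mx mulmxDl mulmxBl -scalemxAl !(dotDr, dotNr, dotZr).
rewrite dot_diag_mx dot_scalar_mx sqnormE; congr (_ - _ * _ + _).
by apply: eq_bigr => i _; rewrite mxE; ring.
Qed.

Lemma fobj_sub y : on_sphere y ->
  fobj A beta y - fobj A beta z =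
  dot (y - z) (hess_mx *m (y - z)) / 2 + beta / 2 * sqdev y z.
Proof.
move=> y_sphere; rewrite /fobj !qform_hess_mx hess_mx_z dot0r y_sphere z_sphere.
have -> : dot y (hess_mx *m y) = dot (y - z) (hess_mx *m (y - z)).
  rewrite mulmxBr hess_mx_z subr0 dotBl.
  by rewrite (dot_ker_sym _ hess_mx_sym hess_mx_z) subr0.
have -> : sqdev y z =
    \sum_i y i 0 ^+ 4 - 2 * \sum_i z i 0 ^+ 2 * y i 0 ^+ 2 + \sum_i z i 0 ^+ 4.
  by rewrite mulr_sumr -sumrB -big_split /=; apply: eq_bigr => i _; ring.
have -> : \sum_i z i 0 ^+ 2 * z i 0 ^+ 2 = \sum_i z i 0 ^+ 4.
  by apply: eq_bigr => i _; rewrite -exprD.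
by rewrite /norm4_4; ring.
Qed.

Lemma rgradE y : on_sphere y ->
  rgrad A beta y = tangent_proj y (hess_mx *m (y - z) + (2 * beta) *: cubic_dev y z).
Proof.
move=> y_sphere; set g := _ + _.
(* the Euclidean gradient differs from g by a multiple of y, which the projection kills *)
have Ey : A *m y + (2 * beta) *: (diagsq y *m y) = g + (2 * lam) *: y.
  rewrite /g {1}A_hess_mx mulmxDl mulmxBl -scalemxAl mul_scalar_mx.
  rewrite -[hess_mx *m y](subr0) -[0]hess_mx_z -mulmxBr /diagsq !mul_diag_mx.
  by apply/matrixP => i j; rewrite (ord1 j) !mxE; ring.
rewrite /rgrad Ey tangent_projE /tangent_proj dotDr dotZr -sqnormE y_sphere.
by rewrite mulr1 scalerDl opprD addrACA subrr addr0.
Qed.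

End Landscape.

Section ScalarBounds.
Variable R : realType.
Implicit Types (a b y z k m dl : R).

Lemma sqr_diff_sqr_le y z : y ^+ 2 <= 1 -> z ^+ 2 <= 1 ->
  (y ^+ 2 - z ^+ 2) ^+ 2 <= 4 * (y - z) ^+ 2.
Proof.
move=> y1 z1; have -> : (y ^+ 2 - z ^+ 2) ^+ 2 = (y - z) ^+ 2 * (y + z) ^+ 2 by ring.
rewrite [in leRHS]mulrC; apply: ler_wpM2l; first exact: sqr_ge0.
by have := sqr_ge0 (y - z); nra.
Qed.

Lemma sqr_diff_sqr_ge y z m : 0 < m -> m <= `|z| -> `|y - z| <= m ->
  m ^+ 2 * (y - z) ^+ 2 <= (y ^+ 2 - z ^+ 2) ^+ 2.
Proof.
move=> m0 mz yzm; have -> : (y ^+ 2 - z ^+ 2) ^+ 2 = (y - z) ^+ 2 * (y + z) ^+ 2 by ring.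
rewrite [in leLHS]mulrC; apply: ler_wpM2l; first exact: sqr_ge0.
rewrite -[(y + z) ^+ 2]real_normK ?num_real // lerXn2r ?nnegrE ?(ltW m0) //.
have := ler_normB (y + z) (y - z).
have -> : y + z - (y - z) = z *+ 2 by rewrite opprB addrC addrA subrK mulr2n.
by rewrite normrMn mulr2n; lra.
Qed.

Lemma cube_mul_le a b dl : 0 <= a -> 0 <= b -> a <= dl ->
  a ^+ 3 * b <= dl * ((a ^+ 4 + b ^+ 2) / 2).
Proof.
move=> a0 b0 adl; have dla : 0 <= dl - a by rewrite subr_ge0.
have := mulr_ge0 (mulr_ge0 (sqr_ge0 a) b0) dla.
have := mulr_ge0 (le_trans a0 adl) (sqr_ge0 (a ^+ 2 - b)).
nra.
Qed.

Lemma cubic_term_le y z k m dl : 0 < m -> `|y - z| <= dl -> dl <= m ->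
  (z != 0 -> k = 0 /\ m <= `|z|) ->
  `|(y - z) ^+ 2 * (y ^+ 2 - z ^+ 2) - k * y * (y ^+ 2 - z ^+ 2)| <=
  dl * ((y ^+ 2 - z ^+ 2) ^+ 2 / m + (y ^+ 2 - z ^+ 2) ^+ 2 + (y - z - k) ^+ 2).
Proof.
move=> m0 yz_dl dl_m z_supp; have dl0 : 0 <= dl := le_trans (normr_ge0 _) yz_dl.
set u := y ^+ 2 - z ^+ 2; have um0 : 0 <= u ^+ 2 / m by rewrite divr_ge0 ?sqr_ge0 ?ltW.
have [z0|z_neq0] := eqVneq z 0.
  rewrite /u z0 expr0n /= !subr0 in yz_dl um0 *.
  have -> : y ^+ 2 * y ^+ 2 - k * y * y ^+ 2 = y ^+ 3 * (y - k) by ring.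
  have y4 : (y ^+ 2) ^+ 2 = `|y| ^+ 4 by rewrite -(real_normK (num_real y)) -exprM.
  rewrite normrM normrX y4 -(real_normK (num_real (y - k))) in um0 *.
  apply: le_trans (cube_mul_le (normr_ge0 _) (normr_ge0 _) yz_dl) _.
  by rewrite ler_wpM2l //; have := sqr_ge0 `|y - k|; have := exprn_ge0 4 (normr_ge0 y); lra.
have [k0 mz] := z_supp z_neq0; rewrite k0 !mul0r subr0 normrM normrX.
have u_ge : m * `|y - z| <= `|u|.
  rewrite -(ler_pXn2r (n:=2)) // ?nnegrE ?mulr_ge0 ?(ltW m0) //.
  by rewrite exprMn !real_normK ?num_real // sqr_diff_sqr_ge // (le_trans yz_dl).
have yz_u : `|y - z| * `|u| <= u ^+ 2 / m.
  by rewrite ler_pdivlMr // -real_normK ?num_real // expr2 mulrAC ler_wpM2r // mulrC.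
rewrite expr2 -mulrA.
apply: le_trans (ler_wpM2l (normr_ge0 _) yz_u) _.
apply: le_trans (ler_wpM2r um0 yz_dl) _.
by rewrite ler_wpM2l // -addrA lerDl addr_ge0 ?sqr_ge0.
Qed.

Lemma abs_mul_le_amgm (s a U V dl : R) : 0 < dl ->
  s ^+ 2 <= U -> a ^+ 2 <= dl ^+ 2 * V -> `|s * a| <= dl * (U + V) / 2.
Proof.
move=> dl0 sU aV; rewrite normrM ler_pdivlMr // -(ler_pM2l dl0).
rewrite -(real_normK (num_real s)) -(real_normK (num_real a)) in sU aV.
(* 2 dl |s| |a| <= dl^2 |s|^2 + |a|^2 <= dl^2 (U + V) *)
have := ler_wpM2l (sqr_ge0 dl) sU; have := sqr_ge0 (dl * `|s| - `|a|).
lra.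
Qed.

Lemma powR34_le (E N c : R) : 0 <= E -> 0 <= N -> 0 <= c ->
  E ^+ 3 <= c * N ^+ 4 -> powR E (3 / 4) <= (c + 1) * N.
Proof.
move=> E0 N0 c0 EN; have cN0 : 0 <= (c + 1) * N by rewrite mulr_ge0 // addr_ge0.
have EcN : E ^+ 3 <= ((c + 1) * N) ^+ 4.
  apply: le_trans EN _; rewrite exprMn ler_wpM2r ?exprn_ge0 //.
  have c1 : 1 <= c + 1 by rewrite lerDr.
  by rewrite (le_trans (_ : c <= c + 1)) ?ler_eXnr // lerDl.
have -> : (c + 1) * N = powR (((c + 1) * N) ^+ 4) 4^-1.
  by rewrite -powR_mulrn // -powRrM mulfV ?powRr1 // pnatr_eq0.
have -> : powR E (3 / 4) = powR (E ^+ 3) 4^-1 by rewrite -powR_mulrn // -powRrM.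
by apply: ge0_ler_powR; rewrite ?nnegrE ?exprn_ge0 ?invr_ge0.
Qed.

End ScalarBounds.

Lemma powR_le_of_test_vector (R : realType) (n : nat) (M K : R) (x g : 'cV[R]_n) :
  0 <= M -> 0 <= K -> M / 4 <= dot x g -> sqnorm x ^+ 2 <= K * M ->
  powR (M / 2) (3 / 4) <= (32 * K + 1) * norm2 g.
Proof.
move=> M0 K0 Mxg xKM; set G := sqnorm g.
apply: powR34_le; rewrite ?divr_ge0 ?sqrtr_ge0 ?mulr_ge0 //.
have -> : norm2 g ^+ 4 = G ^+ 2.
  by rewrite -[4%N]/(2 * 2)%N exprM /norm2 sqr_sqrtr ?sqnorm_ge0.
have [->|M_neq0] := eqVneq M 0.
  by rewrite mul0r expr0n /=; apply: mulr_ge0; [apply: mulr_ge0 | apply: sqr_ge0].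
have M_gt0 : 0 < M by rewrite lt_def M_neq0.
(* squaring Cauchy-Schwarz: (M/4)^4 <= (|x|^2 |g|^2)^2 <= K M |g|^4 *)
have xg : (M / 4) ^+ 2 <= sqnorm x * G.
  have xg0 : 0 <= dot x g by apply: le_trans Mxg; rewrite divr_ge0.
  by apply: le_trans (cauchy_schwarz x g); rewrite lerXn2r ?nnegrE ?divr_ge0.
have : M * (M ^+ 3 / 256) <= M * (K * G ^+ 2).
  have -> : M * (M ^+ 3 / 256) = ((M / 4) ^+ 2) ^+ 2 by field.
  apply: le_trans (_ : (sqnorm x * G) ^+ 2 <= _).
    by rewrite lerXn2r ?nnegrE ?sqr_ge0 ?mulr_ge0 ?sqnorm_ge0.
  by rewrite exprMn mulrA (mulrC M) ler_wpM2r ?sqr_ge0.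
rewrite ler_pM2l // => MKG.
have -> : (M / 2) ^+ 3 = 32 * (M ^+ 3 / 256) by field.
by rewrite -mulrA ler_wpM2l.
Qed.

Lemma exists_min_abs_support (R : realType) (n : nat) (z : 'cV[R]_n) :
  exists m : R, 0 < m /\ forall i, z i 0 != 0 -> m <= `|z i 0|.
Proof.
exists (\big[Order.min/1]_(i | z i 0 != 0) `|z i 0|); split.
  by apply: lt_bigmin => // i; rewrite normr_gt0.
by move=> i zi; apply: (bigmin_le_cond _ (fun i => `|z i 0|) zi).
Qed.

Section TestVector.
Variables (R : realType) (n : nat) (H : 'M[R]_n) (z : 'cV[R]_n) (beta m Cg cH : R).
Hypotheses (H_sym : H^T = H) (H_psd : psd H) (Hz : H *m z = 0)
  (z_sphere : on_sphere z) (beta_gt0 : 0 < beta)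
  (m_gt0 : 0 < m) (m_supp : forall i, z i 0 != 0 -> m <= `|z i 0|)
  (Cg_gt0 : 0 < Cg) (cH_ge0 : 0 <= cH)
  (H_bounded : forall v, `|dot v (H *m v)| <= cH * sqnorm v).

(* The radius is T^-1: dl K0 <= 1 forces |<d, r>| <= 1/2, and dl K1, dl K2 <= 1/4
   bound the error terms of the gradient pairing by (D + beta U) / 4. *)
Let w := (m ^+ 2)^-1.
Let K0 := 1 + Cg * (cH + 1).
Let K1 := m^-1 + 3 / 2 + 3 / 2 * Cg * w.
Let K2 := 3 / 2 * beta * Cg.
Let T := 1 + m^-1 + K0 + 4 * K1 + 4 * K2.
Let K := 3 * ((1 + Cg) / 2) ^+ 2 * (cH + 4 * w ^+ 2 + n%:R) * (1 + beta^-1).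

Let w_gt0 : 0 < w. Proof. by rewrite invr_gt0 exprn_gt0. Qed.
Let Cg_ge0 : 0 <= Cg. Proof. exact: ltW. Qed.
Let K0_ge0 : 0 <= K0. Proof. by rewrite addr_ge0 ?mulr_ge0 ?addr_ge0. Qed.
Let K1_ge0 : 0 <= K1.
Proof.
have : 0 < m^-1 by rewrite invr_gt0.
by have := mulr_ge0 Cg_ge0 (ltW w_gt0); rewrite /K1; lra.
Qed.
Let K2_ge0 : 0 <= K2.
Proof. by have := mulr_ge0 (ltW beta_gt0) Cg_ge0; rewrite /K2; lra. Qed.

Let T_ge : [/\ 1 <= T, m^-1 <= T, K0 <= T, 4 * K1 <= T & 4 * K2 <= T].
Proof.
have : 0 < m^-1 by rewrite invr_gt0.
by have := K0_ge0; have := K1_ge0; have := K2_ge0; rewrite /T; split; lra.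
Qed.

Section Point.
Variables (dl : R) (y k : 'cV[R]_n).
Hypotheses (dl_gt0 : 0 < dl) (dl_small : dl * T <= 1)
  (y_sphere : on_sphere y) (y_near : sqnorm (y - z) <= dl ^+ 2)
  (Hk : H *m k = 0) (k_supp : forall i, z i 0 != 0 -> k i 0 = 0)
  (k_approx : sqnorm (y - z - k) <=
     Cg * (dot (y - z) (H *m (y - z)) + \sum_(i | z i 0 != 0) (y - z) i 0 ^+ 2)).

Let d := y - z.
Let r := d - k.
Let x := 2^-1 *: (d + r).
Let u i := y i 0 ^+ 2 - z i 0 ^+ 2.
Let D := dot d (H *m d).
Let U := sqdev y z.
Let Sd := sqnorm d.
Let R2 := sqnorm r.
Let a := dot d r.
Let s := \sum_i z i 0 ^+ 2 * u i.
Let e := \sum_i (d i 0 ^+ 2 * u i - k i 0 * y i 0 * u i).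
Let g := H *m d + (2 * beta) *: cubic_dev y z.

Let dE i : d i 0 = y i 0 - z i 0. Proof. by rewrite !mxE. Qed.
Let rE i : r i 0 = y i 0 - z i 0 - k i 0. Proof. by rewrite !mxE. Qed.
Let kz i : k i 0 * z i 0 = 0.
Proof. by have [->|/k_supp->] := eqVneq (z i 0) 0; rewrite ?mulr0 ?mul0r. Qed.

Let dl_mul_le (t : R) : 0 <= t -> t <= T -> dl * t <= 1.
Proof. by move=> t0 tT; exact: le_trans (ler_wpM2l (ltW dl_gt0) tT) dl_small. Qed.

Let dl_le1 : dl <= 1.
Proof. by case: T_ge => ? _ _ _ _; rewrite -[dl]mulr1 dl_mul_le. Qed.

Let dl_le_m : dl <= m.
Proof.
case: T_ge => _ ? _ _ _; rewrite -[m]mul1r -ler_pdivrMr //.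
by rewrite dl_mul_le ?invr_ge0 ?(ltW m_gt0).
Qed.

Let dl_K0 : dl * K0 <= 1.
Proof. by case: T_ge => _ _ ? _ _; rewrite dl_mul_le. Qed.

Let dl_K1 : dl * K1 <= 1 / 4.
Proof.
case: T_ge => _ _ _ ? _; have := dl_mul_le (mulr_ge0 (ler0n _ 4) K1_ge0).
by lra.
Qed.

Let dl_K2 : dl * K2 <= 1 / 4.
Proof.
case: T_ge => _ _ _ _ ?; have := dl_mul_le (mulr_ge0 (ler0n _ 4) K2_ge0).
by lra.
Qed.

Let dot_y_g : dot y g = D + 2 * beta * (U + s).
Proof.
rewrite /g dotDr dotZr; congr (_ + _).
  by rewrite -[in LHS](subrK z y) dotDl (dot_ker_sym _ H_sym Hz) addr0.
rewrite /U /sqdev /s -big_split /=; congr (_ * _); apply: eq_bigr => i _.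
by rewrite mxE /u; ring.
Qed.

Let dot_x_y : dot x y = a / 2.
Proof.
have -> : dot x y = 2^-1 * (a + \sum_i u i - \sum_i k i 0 * z i 0).
  rewrite /x dotZl /a /dot -big_split -sumrB /=; congr (_ * _).
  by apply: eq_bigr => i _; rewrite mxE dE rE /u; ring.
have kz0 : \sum_i k i 0 * z i 0 = 0 by apply: big1 => i _; apply: kz.
by rewrite (sum_sqr_sub_sphere y_sphere z_sphere) kz0 subr0 addr0 mulrC.
Qed.

Let dot_x_g : dot x g = D + beta * (U + e).
Proof.
have Hd_k : dot k (H *m d) = 0 by apply: dot_ker_sym.
have xHd : dot x (H *m d) = D by rewrite /x /r dotZl dotDl dotBl Hd_k subr0 /D; field.
rewrite /g dotDr dotZr xHd; congr (_ + _).
rewrite /x /cubic_dev dotZl /dot /U /sqdev /e -big_split /= !mulr_sumr.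
by apply: eq_bigr => i _; rewrite !mxE /u; field.
Qed.

Let dot_x_tangent_g :
  dot x (tangent_proj y g) = D * (1 - a / 2) + beta * U * (1 - a) + beta * e - beta * s * a.
Proof. by rewrite /tangent_proj dotBr dotZr dot_x_g dot_y_g dot_x_y; field. Qed.

Let D_ge0 : 0 <= D. Proof. by rewrite /D -qformE. Qed.
Let U_ge0 : 0 <= U. Proof. exact: sqdev_ge0. Qed.
Let Sd_le1 : Sd <= 1.
Proof. by apply: le_trans y_near _; rewrite expr_le1 ?(ltW dl_gt0). Qed.

Let abs_d_le i : `|d i 0| <= dl.
Proof.
rewrite -(ler_pXn2r (n:=2)) ?nnegrE ?(ltW dl_gt0) // real_normK ?num_real //.
exact: le_trans (sqr_coord_le_sqnorm d i) y_near.
Qed.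

Let sqdev_le : U <= 4 * Sd.
Proof.
rewrite /U /sqdev /Sd /sqnorm mulr_sumr; apply: ler_sum => i _.
by rewrite dE sqr_diff_sqr_le ?sqr_coord_le1.
Qed.

Let supp_coord_le i : z i 0 != 0 -> d i 0 ^+ 2 <= u i ^+ 2 * w.
Proof.
move=> zi; rewrite ler_pdivlMr ?exprn_gt0 // mulrC dE sqr_diff_sqr_ge ?m_supp //.
by rewrite -dE (le_trans (abs_d_le i)).
Qed.

Let supp_sum_le : \sum_(i | z i 0 != 0) d i 0 ^+ 2 <= U * w.
Proof.
rewrite /U /sqdev mulr_suml big_mkcond /=; apply: ler_sum => i _.
by case: ifP => [/supp_coord_le //|_]; rewrite mulr_ge0 ?sqr_ge0 ?(ltW w_gt0).
Qed.

Let R2_le : R2 <= Cg * (D + U * w).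
Proof. by apply: le_trans k_approx _; rewrite ler_wpM2l // lerD2l supp_sum_le. Qed.

Let e_le : `|e| <= dl * (U * m^-1 + U + R2).
Proof.
apply: le_trans (ler_norm_sum _ _ _) _.
rewrite /U /sqdev /R2 /sqnorm mulr_suml -!big_split mulr_sumr /=.
apply: ler_sum => i _; rewrite dE rE; apply: cubic_term_le => //; first by rewrite -dE.
by move=> zi; rewrite k_supp ?m_supp.
Qed.

Let s_sqr_le : s ^+ 2 <= U.
Proof.
have := cauchy_schwarz z (\col_i (z i 0 * u i)).
have -> : dot z (\col_i (z i 0 * u i)) = s by apply: eq_bigr => i _; rewrite mxE; ring.
move/le_trans; apply; rewrite z_sphere mul1r; apply: ler_sum => i _.
by rewrite mxE exprMn ler_piMl ?sqr_ge0 ?sqr_coord_le1.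
Qed.

Let a_sqr_le : a ^+ 2 <= dl ^+ 2 * R2.
Proof.
apply: le_trans (cauchy_schwarz d r) _.
by rewrite ler_wpM2r ?sqnorm_ge0.
Qed.

Let abs_a_le : `|a| <= 1 / 2.
Proof.
have supp_le : \sum_(i | z i 0 != 0) d i 0 ^+ 2 <= Sd.
  rewrite /Sd /sqnorm big_mkcond /=; apply: ler_sum => i _.
  by case: ifP; rewrite ?sqr_ge0.
have R2_Sd : R2 <= Cg * (cH + 1) * Sd.
  apply: le_trans k_approx _; rewrite -mulrA ler_wpM2l // mulrDl mul1r lerD //.
  exact: le_trans (ler_norm _) (H_bounded d).
(* a^2 <= Sd R2 <= ((Sd + R2) / 2)^2 and Sd + R2 <= K0 dl^2 <= 1 *)
have sum_le : Sd + R2 <= 1.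
  have R2_dl : R2 <= Cg * (cH + 1) * dl ^+ 2.
    by apply: le_trans R2_Sd _; rewrite ler_wpM2l ?mulr_ge0 ?addr_ge0.
  have : 0 <= dl * (1 - dl * K0) by rewrite mulr_ge0 ?subr_ge0 ?(ltW dl_gt0).
  by have := dl_le1; move: y_near; rewrite -/d -/Sd /K0; nra.
have cs : a ^+ 2 <= Sd * R2 := cauchy_schwarz d r.
have Sd0 : 0 <= Sd := sqnorm_ge0 d; have R20 : 0 <= R2 := sqnorm_ge0 r.
rewrite -(ler_pXn2r (n:=2)) ?nnegrE //; last by rewrite divr_ge0.
rewrite -normrX ger0_norm ?sqr_ge0 //.
have : 0 <= (1 - (Sd + R2)) * (1 + Sd + R2) by apply: mulr_ge0; lra.
by have := sqr_ge0 (Sd - R2); nra.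
Qed.

Lemma test_vector_grad_ge : (D + beta * U) / 4 <= dot x (tangent_proj y g).
Proof.
have beta0 := ltW beta_gt0; have dl0 := ltW dl_gt0.
have /andP[_ a_hi] : - (1 / 2) <= a <= 1 / 2 by rewrite -ler_norml abs_a_le.
have Da : 0 <= D * (1 / 2 - a) by rewrite mulr_ge0 // subr_ge0.
have bUa : 0 <= beta * U * (1 / 2 - a) by rewrite !mulr_ge0 // subr_ge0.
have be : - (beta * (dl * (U * m^-1 + U + R2))) <= beta * e.
  by rewrite -mulrN ler_wpM2l // lerNnormlW // e_le.
have bsa : beta * s * a <= beta * (dl * (U + R2) / 2).
  rewrite -mulrA ler_wpM2l //.
  exact: le_trans (ler_norm _) (abs_mul_le_amgm dl_gt0 s_sqr_le a_sqr_le).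
(* the two error terms are absorbed by a quarter of D + beta U *)
have bR2 : beta * (3 / 2 * dl) * R2 <= beta * (3 / 2 * dl) * (Cg * (D + U * w)).
  by apply: ler_wpM2l; rewrite ?R2_le // !mulr_ge0 ?invr_ge0.
have bU : beta * U * (dl * K1) <= beta * U * (1 / 4) by apply: ler_wpM2l; rewrite ?mulr_ge0.
have DK : D * (dl * K2) <= D * (1 / 4) by apply: ler_wpM2l.
have err : - (beta * U / 4 + D / 4) <= beta * e - beta * s * a.
  (* [lra] fails in the presence of the section's local definitions, hence the
     [clearbody] or [generalize] before each call *)
  by move: bU DK; rewrite /K1 /K2; clearbody w U D R2 e s a; lra.
rewrite dot_x_tangent_g; move: Da bUa err D_ge0.
by generalize D U a e s => *; lra.
Qed.

Lemma test_vector_sqnorm_le : sqnorm x ^+ 2 <= K * (D + beta * U).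
Proof.
pose SA : R := \sum_i `|u i|; pose c : R := (1 + Cg) / 2.
have SA0 : 0 <= SA by rewrite sumr_ge0.
have w0 := ltW w_gt0; have c0 : 0 <= c by rewrite divr_ge0 ?addr_ge0.
have Sd_le : Sd <= U * w + SA.
  rewrite /Sd /sqnorm /U /sqdev mulr_suml -big_split /=; apply: ler_sum => i _.
  have [z0|/supp_coord_le] := eqVneq (z i 0) 0; last by move/le_trans; apply; rewrite lerDl.
  by rewrite /u dE z0 expr0n /= !subr0 ger0_norm ?sqr_ge0 // lerDr mulr_ge0 ?sqr_ge0.
have SA_le : SA ^+ 2 <= n%:R * U.
  have := cauchy_schwarz (\col_i `|u i|) (const_mx 1).
  have -> : dot (\col_i `|u i|) (const_mx 1) = SA by apply: eq_bigr => i _; rewrite !mxE mulr1.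
  have -> : sqnorm (const_mx 1 : 'cV[R]_n) = n%:R.
    by rewrite /sqnorm (eq_bigr (fun=> 1)) ?sumr_const ?card_ord // => i _; rewrite mxE expr1n.
  have -> : sqnorm (\col_i `|u i|) = U by apply: eq_bigr => i _; rewrite mxE -normrX ger0_norm ?sqr_ge0.
  by rewrite mulrC.
have U_le4 : U <= 4 by apply: le_trans sqdev_le _; rewrite ler_piMr.
have D_le : D <= cH.
  apply: le_trans (ler_norm D) _; apply: le_trans (H_bounded d) _.
  by rewrite ler_piMr.
have x_le : sqnorm x <= c * (D + U * w + SA).
  apply: le_trans (sqnorm_midpoint_le d r) _.
  have := R2_le; have := mulr_ge0 Cg_ge0 SA0; have := mulr_ge0 Cg_ge0 (mulr_ge0 U_ge0 w0).
  by move: Sd_le D_ge0; rewrite /c -/Sd -/R2; generalize Sd R2 D U SA => *; lra.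
(* (p + q + t)^2 <= 3 (p^2 + q^2 + t^2), then bound each square linearly *)
have sq_le : (D + U * w + SA) ^+ 2 <= 3 * (cH + 4 * w ^+ 2 + n%:R) * (D + U).
  have hD : D ^+ 2 <= cH * D by rewrite expr2 ler_wpM2r.
  have hU : (U * w) ^+ 2 <= 4 * w ^+ 2 * U.
    have U2 : U ^+ 2 <= 4 * U by rewrite expr2 ler_wpM2r.
    by rewrite exprMn; have := ler_wpM2r (sqr_ge0 w) U2; lra.
  have := sqr_ge0 (D - U * w); have := sqr_ge0 (D - SA); have := sqr_ge0 (U * w - SA).
  have := mulr_ge0 cH_ge0 U_ge0; have := mulr_ge0 (sqr_ge0 w) D_ge0.
  have := mulr_ge0 (ler0n R n) D_ge0.
  by move: hD hU SA_le; generalize D U SA => *; lra.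
have DU_le : D + U <= (1 + beta^-1) * (D + beta * U).
  have bD : 0 <= beta^-1 * D by rewrite mulr_ge0 ?invr_ge0 ?(ltW beta_gt0).
  rewrite mulrDl mul1r mulrDr mulrA mulVf ?gt_eqF // mul1r.
  have bU : 0 <= beta * U by rewrite mulr_ge0 ?(ltW beta_gt0).
  by move: bD bU; generalize D U => *; lra.
have x_sq : sqnorm x ^+ 2 <= c ^+ 2 * (D + U * w + SA) ^+ 2.
  have Q0 : 0 <= D + U * w + SA by rewrite !addr_ge0 ?mulr_ge0.
  by rewrite -exprMn lerXn2r ?nnegrE ?sqnorm_ge0 ?(mulr_ge0 c0 Q0).
apply: le_trans x_sq _.
have -> : K * (D + beta * U) =
    c ^+ 2 * (3 * (cH + 4 * w ^+ 2 + n%:R) * ((1 + beta^-1) * (D + beta * U))).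
  by rewrite /K /c; ring.
apply: ler_wpM2l; first exact: sqr_ge0.
apply: le_trans sq_le (ler_wpM2l _ DU_le).
by rewrite mulr_ge0 // !addr_ge0 ?mulr_ge0 ?sqr_ge0 ?ler0n.
Qed.

End Point.

Lemma test_vector_exists :
  (forall v, exists k, [/\ H *m k = 0, forall i, z i 0 != 0 -> k i 0 = 0 &
     sqnorm (v - k) <= Cg * (dot v (H *m v) + \sum_(i | z i 0 != 0) v i 0 ^+ 2)]) ->
  exists dl K' : R, [/\ 0 < dl, 0 <= K' & forall y, on_sphere y -> sqnorm (y - z) <= dl ^+ 2 ->
    let M := dot (y - z) (H *m (y - z)) + beta * sqdev y z in
    exists x, M / 4 <= dot x (tangent_proj y (H *m (y - z) + (2 * beta) *: cubic_dev y z))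
              /\ sqnorm x ^+ 2 <= K' * M].
Proof.
move=> kernel_approx; have T_gt0 : 0 < T by case: T_ge => T1 _ _ _ _; lra.
exists T^-1, K; split; first by rewrite invr_gt0.
  have f3 := addr_ge0 (addr_ge0 cH_ge0 (mulr_ge0 (ler0n R 4) (sqr_ge0 w))) (ler0n R n).
  have f4 : 0 <= 1 + beta^-1 by rewrite addr_ge0 ?invr_ge0 ?(ltW beta_gt0).
  exact: mulr_ge0 (mulr_ge0 (mulr_ge0 (ler0n R 3) (sqr_ge0 _)) f3) f4.
move=> y y_sphere y_near M; have [k [Hk k_supp k_approx]] := kernel_approx (y - z).
have dl_small : T^-1 * T <= 1 by rewrite mulVf ?gt_eqF.
exists (2^-1 *: (y - z + (y - z - k))); split.
  by apply: (test_vector_grad_ge (dl := T^-1)); rewrite ?invr_gt0.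
by apply: (test_vector_sqnorm_le (dl := T^-1)); rewrite ?invr_gt0.
Qed.

End TestVector.

Unset Implicit Arguments.

Theorem theorem16 (R : realType) (n : nat) (A : 'M[R]_n) (beta lam : R)
  (z : 'cV[R]_n) :
  A^T = A -> 0 < beta ->
  on_sphere z ->
  2 * lam = qform A z + 2 * beta * norm4_4 z ->
  (A + (2 * beta) *: diagsq z) *m z = (2 * lam) *: z ->
  psd (A + (2 * beta) *: diagsq z - (2 * lam)%:M) ->
  exists delta eta : R, 0 < delta /\ 0 < eta /\
    forall y : 'cV[R]_n, on_sphere y -> norm2 (y - z) < delta ->
      powR `|fobj A beta y - fobj A beta z| (3 / 4) <= eta * norm2 (rgrad A beta y).
Proof.
move=> A_sym beta_gt0 z_sphere _ z_stat H_psd.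
have H_sym := hess_mx_sym beta lam z A_sym; have Hz := hess_mx_z z_stat.
have [Cg [Cg_gt0 kernel_approx]] := psd_support_error_bound (fun i => z i 0 != 0) H_sym H_psd.
have [m [m_gt0 m_supp]] := exists_min_abs_support z.
have [cH [cH_ge0 H_bounded]] := quad_form_bounded (hess_mx A beta lam z).
have [dl [K [dl_gt0 K_ge0 test]]] := test_vector_exists H_sym H_psd Hz z_sphere
  beta_gt0 m_gt0 m_supp Cg_gt0 cH_ge0 H_bounded kernel_approx.
exists dl, (32 * K + 1); split => //; split; first by rewrite ltr_wpDl ?mulr_ge0.
move=> y y_sphere /sqnorm_le_of_norm2_lt /(test y y_sphere) [x [x_lower x_upper]].
rewrite (fobj_sub A_sym z_sphere z_stat y_sphere) (rgradE z_stat y_sphere).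
set D := dot (y - z) _; set U := sqdev y z.
have D_ge0 : 0 <= D by rewrite /D -qformE.
have U_ge0 : 0 <= U := sqdev_ge0 y z.
have -> : D / 2 + beta / 2 * U = (D + beta * U) / 2 by ring.
rewrite ger0_norm ?divr_ge0 ?addr_ge0 ?mulr_ge0 ?(ltW beta_gt0) //.
by apply: powR_le_of_test_vector x_lower x_upper; rewrite ?addr_ge0 ?mulr_ge0 ?(ltW beta_gt0).
Qed.
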